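(* Let $\mathfrak g$ be a finite-dimensional Lie algebra over a field $\mathbb K$ of characteristic zero having an ideal $\mathfrak h_m$ isomorphic to the Heisenberg algebra of dimension $2m+1$, such that the center of $\mathfrak g$ coincides with the center of $\mathfrak h_m$. Let $\mathcal A$ be a commutative subalgebra of $\operatorname{Ann}(\mathfrak h_m)$ complete in $\operatorname{Ann}(\mathfrak h_m)$, and $\mathcal B$ a complete commutative subalgebra of $S(\mathfrak h_m)$. Then $\mathcal A+\mathcal B$ is complete in $S(\mathfrak g)$.
   Context: The Heisenberg algebra $\mathfrak h_m$ is $V\oplus\mathbb K e$ with $\dim V=2m$, $e$ central and $[\xi_1,\xi_2]=\omega(\xi_1,\xi_2)e$ for $\xi_i\in V$, $\omega$ a symplectic form on $V$. $S(\mathfrak g)$ is the polynomial algebra on $\mathfrak g^*$ with Lie–Poisson bracket $\{f,g\}(x)=\langle x,[df(x),dg(x)]\rangle$; $S(\mathfrak h_m)\subset S(\mathfrak g)$. $\Phi_x(\xi,\eta)=\langle x,[\xi,\eta]\rangle$. $\operatorname{Ann}(\mathfrak h_m)=\{f\in S(\mathfrak g)\mid\{f,\eta\}=0\ \forall\eta\in\mathfrak h_m\}$. For a subalgebra $\mathcal F$, $d\mathcal F(x)$ is the span of the differentials of its elements at $x$; a commutative $\mathcal A\subset\mathcal F$ is complete in $\mathcal F$ if $d\mathcal A(x)$ is maximal $\Phi_x$-isotropic in $d\mathcal F(x)$ for generic $x\in\mathfrak g^*$. A commutative subalgebra of $S(\mathfrak l)$ is complete if its transcendence degree is $\frac12(\dim\mathfrak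 l+\operatorname{ind}\mathfrak l)$ (index = generic corank of $\Phi_x$), equivalently complete in $S(\mathfrak l)$ in the previous sense. $\mathcal A+\mathcal B$ is the smallest Poisson subalgebra containing both. *)

From HB Require Import structures.
From mathcomp Require Import all_boot all_order all_algebra.
From mathcomp Require Import mpoly.
Set Implicit Arguments.
Unset Strict Implicit.
Unset Printing Implicit Defensive.
Import Order.TTheory GRing.Theory Num.Theory.
Local Open Scope ring_scope.

(* The Lie algebra g is K^n, realised as row vectors 'rV[K]_n, with bracket br.
   An element x of g^* is given by its coordinates <x, e_i> in the dual basis,
   also stored as a row vector 'rV[K]_n.
   S(g) = polynomial functions on g^* = {mpoly K[n]}, where 'X_i is the basis
   vector e_i of g viewed as a linear function on g^*. *)

Section Defs.
Variable K : fieldType.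
Variable n : nat.
Local Notation vec := 'rV[K]_n.
Local Notation poly := {mpoly K[n]}.

Definition is_lie_bracket (br : vec -> vec -> vec) : Prop :=
  [/\ (forall a u v w, br (a *: u + v) w = a *: br u w + br v w),
      (forall a u v w, br u (a *: v + w) = a *: br u v + br u w),
      (forall u, br u u = 0) &
      (forall u v w, br u (br v w) + br v (br w u) + br w (br u v) = 0)].

Definition lin (v : vec) : poly := \sum_(i < n) v ord0 i *: 'X_i.

Definition evalp (f : poly) (x : vec) : K := meval (fun i => x ord0 i) f.

Definition dpoly (f : poly) (x : vec) : vec := \row_i evalp (mderiv i f) x.

Definition Phi (br : vec -> vec -> vec) (x xi eta : vec) : K :=
  \sum_(k < n) x ord0 k * br xi eta ord0 k.

(* Lie--Poisson bracket: {f,g}(x) = <x, [df(x), dg(x)]>, as a polynomial *)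
Definition pbr (br : vec -> vec -> vec) (f g : poly) : poly :=
  \sum_(i < n) \sum_(j < n)
     lin (br (delta_mx ord0 i) (delta_mx ord0 j)) * mderiv i f * mderiv j g.

Definition is_subalg (A : poly -> Prop) : Prop :=
  [/\ (forall c : K, A c%:MP),
      (forall f g, A f -> A g -> A (f + g)),
      (forall f g, A f -> A g -> A (f * g)) &
      (forall (c : K) f, A f -> A (c *: f))].

Definition is_poisson_subalg (br : vec -> vec -> vec) (A : poly -> Prop) : Prop :=
  is_subalg A /\ (forall f g, A f -> A g -> A (pbr br f g)).

Definition is_commutative (br : vec -> vec -> vec) (A : poly -> Prop) : Prop :=
  forall f g, A f -> A g -> pbr br f g = 0.

(* A + B : the smallest Poisson subalgebra containing A and B *)
Definition poisson_sum (br : vec -> vec -> vec) (A B : poly -> Prop) : poly -> Prop :=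
  fun f => forall C, is_poisson_subalg br C ->
    (forall g, A g -> C g) -> (forall g, B g -> C g) -> C f.

Definition Ann (br : vec -> vec -> vec) (h : vec -> Prop) : poly -> Prop :=
  fun f => forall eta, h eta -> pbr br f (lin eta) = 0.

Definition dspan (F : poly -> Prop) (x : vec) : vec -> Prop :=
  fun v => exists k (fs : 'I_k -> poly) (cs : 'I_k -> K),
    (forall i, F (fs i)) /\ v = \sum_(i < k) cs i *: dpoly (fs i) x.

Definition is_subspace (U : vec -> Prop) : Prop :=
  U 0 /\ forall (a : K) u v, U u -> U v -> U (a *: u + v).

Definition isotropic (br : vec -> vec -> vec) (x : vec) (U : vec -> Prop) : Prop :=
  forall u v, U u -> U v -> Phi br x u v = 0.

Definition max_isotropic_in (br : vec -> vec -> vec) (x : vec) (L W : vec -> Prop) : Prop :=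
  [/\ is_subspace L, (forall v, L v -> W v), isotropic br x L &
      forall U, is_subspace U -> isotropic br x U ->
        (forall v, L v -> U v) -> (forall v, U v -> W v) ->
        forall v, U v -> L v].

Definition generic (P : vec -> Prop) : Prop :=
  exists p : poly, p != 0 /\ forall x, evalp p x != 0 -> P x.

Definition complete_in (br : vec -> vec -> vec) (F A : poly -> Prop) : Prop :=
  [/\ forall f, A f -> F f, is_commutative br A &
      generic (fun x => max_isotropic_in br x (dspan A x) (dspan F x))].

Definition Sg : poly -> Prop := fun _ => True.

Definition center (br : vec -> vec -> vec) : vec -> Prop := fun z => forall y, br z y = 0.

Definition center_in (br : vec -> vec -> vec) (h : vec -> Prop) : vec -> Prop :=
  fun z => h z /\ forall y, h y -> br z y = 0.

Definition is_ideal (br : vec -> vec -> vec) (h : vec -> Prop) : Prop :=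
  is_subspace h /\ forall u v, h v -> h (br u v).

End Defs.

(* The Heisenberg algebra h_m = V (+) K e, V = K^(2m), with symplectic form
   omega(xi, eta) = xi *m om *m eta^T; realised on 'rV_(m.*2 + 1) with the
   last coordinate along e. *)
Definition symplectic_form (K : fieldType) (m : nat) (om : 'M[K]_(m.*2)) : Prop :=
  om^T = - om /\ om \in unitmx.

Definition heis_br (K : fieldType) (m : nat) (om : 'M[K]_(m.*2))
    (u v : 'rV[K]_(m.*2 + 1)) : 'rV[K]_(m.*2 + 1) :=
  row_mx 0 (lsubmx u *m om *m (lsubmx v)^T).

Definition img (K : fieldType) (k n : nat) (phi : 'rV[K]_k -> 'rV[K]_n) :
  'rV[K]_n -> Prop := fun v => exists u, v = phi u.

(* S(h) inside S(g), for h = image of phi: polynomials in the phi(e_j) *)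
Definition Sh (K : fieldType) (k n : nat) (phi : 'rV[K]_k -> 'rV[K]_n) :
  {mpoly K[n]} -> Prop :=
  fun f => exists q : {mpoly K[k]},
    f = comp_mpoly [tuple lin (phi (delta_mx ord0 j)) | j < k] q.

From HB Require Import structures.
From mathcomp Require Import all_boot all_order all_algebra.
From mathcomp Require Import mpoly.
From mathcomp Require Import ring.
Import Order.TTheory GRing.Theory Num.Theory.
Local Open Scope ring_scope.
Set Implicit Arguments. Unset Strict Implicit. Unset Printing Implicit Defensive.

(* Let e span the centre of h_m and work at points x with <x, e> <> 0, a
   nonempty Zariski-open condition.  There, Phi_x restricted to h_m has
   radical K e, and the projection of V along the Phi_x-orthogonal of h_m is
   onto.  Two facts follow.
   (1) For every xi in g there is F in Ann(h_m) with
       dF(x) in <x, e> xi + h_m, namely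
       F = e xi - sum_k w^k [xi, v_k] + 1/2 sum_(k,l) c_kl w^k w^l
       for a symplectic basis (v_k), (w^k) of V and [[xi, v_k], v_l] = c_kl e;
       hence d Ann(h_m)(x) contains the Phi_x-orthogonal of h_m.
   (2) Let U be Phi_x-isotropic and contain dA(x) + dB(x), and let v in U.
       Write v = p + w with p in V and w Phi_x-orthogonal to h_m.  Then p lies
       in d S(h_m)(x) and is orthogonal to dB(x), so p lies in dB(x) by
       maximality; and w lies in d Ann(h_m)(x) by (1) and is orthogonal to
       dA(x), so w lies in dA(x).  Thus U = dA(x) + dB(x). *)

Section LieBracket.
Variables (K : fieldType) (n : nat) (br : 'rV[K]_n -> 'rV[K]_n -> 'rV[K]_n).
Hypothesis hbr : is_lie_bracket br.
Local Notation vec := 'rV[K]_n.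

Lemma brPl a u v w : br (a *: u + v) w = a *: br u w + br v w.
Proof. by case: hbr. Qed.
Lemma brPr a u v w : br u (a *: v + w) = a *: br u v + br u w.
Proof. by case: hbr. Qed.
Lemma brvv u : br u u = 0.
Proof. by case: hbr. Qed.
Lemma br_jacobi u v w : br u (br v w) + br v (br w u) + br w (br u v) = 0.
Proof. by case: hbr. Qed.

Lemma br0l w : br 0 w = 0.
Proof. by have := brPl (-1) w w w; rewrite !scaleN1r !addNr. Qed.
Lemma br0r w : br w 0 = 0.
Proof. by have := brPr (-1) w w w; rewrite !scaleN1r !addNr. Qed.
Lemma brDl u v w : br (u + v) w = br u w + br v w.
Proof. by have := brPl 1 u v w; rewrite !scale1r. Qed.
Lemma brDr u v w : br u (v + w) = br u v + br u w.
Proof. by have := brPr 1 u v w; rewrite !scale1r. Qed.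
Lemma brZl a u w : br (a *: u) w = a *: br u w.
Proof. by have := brPl a u 0 w; rewrite !addr0 br0l addr0. Qed.
Lemma brZr a u w : br u (a *: w) = a *: br u w.
Proof. by have := brPr a u w 0; rewrite !addr0 br0r addr0. Qed.
Lemma brC u v : br u v = - br v u.
Proof.
apply/eqP; rewrite -addr_eq0; apply/eqP.
by have := brvv (u + v); rewrite brDl !brDr !brvv add0r addr0.
Qed.
Lemma brNr u v : br u (- v) = - br u v.
Proof. by rewrite -scaleN1r brZr scaleN1r. Qed.
Lemma br_suml (I : Type) (r : seq I) (P : pred I) (F : I -> vec) w :
  br (\sum_(i <- r | P i) F i) w = \sum_(i <- r | P i) br (F i) w.
Proof. by elim/big_rec2: _ => [|i a b _ <-]; rewrite ?br0l ?brDl. Qed.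
Lemma br_sumr (I : Type) (r : seq I) (P : pred I) (F : I -> vec) w :
  br w (\sum_(i <- r | P i) F i) = \sum_(i <- r | P i) br w (F i).
Proof. by elim/big_rec2: _ => [|i a b _ <-]; rewrite ?br0r ?brDr. Qed.

Lemma br_expand u v : br u v =
  \sum_(i < n) \sum_(j < n) (u ord0 i * v ord0 j) *: br (delta_mx ord0 i) (delta_mx ord0 j).
Proof.
rewrite {1}[u]row_sum_delta br_suml; apply: eq_bigr => i _.
rewrite brZl {1}[v]row_sum_delta br_sumr scaler_sumr; apply: eq_bigr => j _.
by rewrite brZr scalerA.
Qed.

End LieBracket.

Section PoissonBracket.
Variables (K : fieldType) (n : nat) (br : 'rV[K]_n -> 'rV[K]_n -> 'rV[K]_n).
Hypothesis hbr : is_lie_bracket br.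
Local Notation vec := 'rV[K]_n.
Local Notation poly := {mpoly K[n]}.

Lemma lin_is_linear : linear (@lin K n).
Proof.
move=> a u v; rewrite /lin scaler_sumr -big_split; apply: eq_bigr => i _.
by rewrite !mxE scalerDl scalerA.
Qed.
HB.instance Definition _ := GRing.isLinear.Build K vec poly _ (@lin K n) lin_is_linear.

Lemma mderiv_lin j (v : vec) : mderiv j (lin v) = (v ord0 j)%:MP.
Proof.
rewrite /lin raddf_sum /= (bigD1 j) //= big1 => [|i /negbTE nij].
  rewrite mderivZ mderivX mnm1E eqxx.
  have -> : (U_(j) - U_(j))%MM = 0%MM by apply/mnmP => k; rewrite mnmBE subnn mnm0E.
  by rewrite mpolyX0 scale1r -mul_mpolyC -mpolyCM mulr1 addr0.
by rewrite mderivZ mderivX mnm1E nij scale0r scaler0.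
Qed.

Lemma evalp0 (x : vec) : evalp 0 x = 0.
Proof. exact: meval0. Qed.
Lemma evalpC c (x : vec) : evalp c%:MP x = c.
Proof. exact: mevalC. Qed.
Lemma evalpN (f : poly) x : evalp (- f) x = - evalp f x.
Proof. exact: mevalN. Qed.
Lemma evalpD (f g : poly) x : evalp (f + g) x = evalp f x + evalp g x.
Proof. exact: mevalD. Qed.
Lemma evalpM (f g : poly) x : evalp (f * g) x = evalp f x * evalp g x.
Proof. exact: mevalM. Qed.
Lemma evalpZ c (f : poly) x : evalp (c *: f) x = c * evalp f x.
Proof. exact: mevalZ. Qed.
Lemma evalp_sum (x : vec) (I : Type) (r : seq I) (P : pred I) (F : I -> poly) :
  evalp (\sum_(i <- r | P i) F i) x = \sum_(i <- r | P i) evalp (F i) x.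
Proof. exact: raddf_sum. Qed.
Lemma evalp_lin (v x : vec) : evalp (lin v) x = \sum_(k < n) x ord0 k * v ord0 k.
Proof.
rewrite /lin evalp_sum; apply: eq_bigr => k _.
by rewrite evalpZ /evalp mevalXU mulrC.
Qed.

Lemma dpolyC c (x : vec) : dpoly (c%:MP : poly) x = 0.
Proof. by apply/rowP => i; rewrite !mxE mderivC evalp0. Qed.
Lemma dpolyD (f g : poly) x : dpoly (f + g) x = dpoly f x + dpoly g x.
Proof. by apply/rowP => i; rewrite !mxE mderivD evalpD. Qed.
Lemma dpolyZ c (f : poly) x : dpoly (c *: f) x = c *: dpoly f x.
Proof. by apply/rowP => i; rewrite !mxE mderivZ evalpZ. Qed.
Lemma dpolyM (f g : poly) x :
  dpoly (f * g) x = evalp f x *: dpoly g x + evalp g x *: dpoly f x.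
Proof. by apply/rowP => i; rewrite !mxE mderivM evalpD !evalpM; ring. Qed.
Lemma dpoly_lin (v x : vec) : dpoly (lin v) x = v.
Proof. by apply/rowP => i; rewrite !mxE mderiv_lin evalpC. Qed.

Lemma PhiE x u v : Phi br x u v = evalp (lin (br u v)) x.
Proof. by rewrite evalp_lin. Qed.

Lemma evalp_pbr f g x : evalp (pbr br f g) x = Phi br x (dpoly f x) (dpoly g x).
Proof.
rewrite PhiE (br_expand hbr) linear_sum evalp_sum /pbr evalp_sum; apply: eq_bigr => i _.
rewrite linear_sum !evalp_sum; apply: eq_bigr => j _.
by rewrite linearZ evalpZ !evalpM /dpoly !mxE; ring.
Qed.

Definition pder (eta : vec) (f : poly) : poly :=
  \sum_(i < n) lin (br (delta_mx ord0 i) eta) * mderiv i f.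

Lemma pder_is_linear eta : linear (pder eta).
Proof.
move=> a f g; rewrite /pder scaler_sumr -big_split; apply: eq_bigr => i _.
by rewrite mderivD mderivZ mulrDr scalerAr.
Qed.
HB.instance Definition _ eta :=
  GRing.isLinear.Build K poly poly _ (pder eta) (pder_is_linear eta).

Lemma pderC eta c : pder eta c%:MP = 0.
Proof. by rewrite /pder big1 // => i _; rewrite mderivC mulr0. Qed.
Lemma pderM eta f g : pder eta (f * g) = f * pder eta g + g * pder eta f.
Proof.
rewrite /pder !mulr_sumr -big_split; apply: eq_bigr => i _.
by rewrite mderivM /=; ring.
Qed.
Lemma pder_lin eta v : pder eta (lin v) = lin (br v eta).
Proof.
rewrite /pder {2}[v]row_sum_delta (br_suml hbr) linear_sum; apply: eq_bigr => i _.
by rewrite mderiv_lin (brZl hbr) linearZ mulrC mul_mpolyC.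
Qed.

Lemma pbrE f g : pbr br f g = \sum_(j < n) pder (delta_mx ord0 j) f * mderiv j g.
Proof.
rewrite /pbr exchange_big; apply: eq_bigr => j _; rewrite /pder mulr_suml.
exact: eq_bigr.
Qed.

Lemma pbr_lin f eta : pbr br f (lin eta) = pder eta f.
Proof.
rewrite pbrE /pder; under eq_bigr do rewrite mulr_suml.
rewrite exchange_big; apply: eq_bigr => i _; rewrite {2}[eta]row_sum_delta.
rewrite (br_sumr hbr) linear_sum mulr_suml; apply: eq_bigr => j _.
by rewrite mderiv_lin (brZr hbr) linearZ /= -!mul_mpolyC; ring.
Qed.

Lemma pbrC f g : pbr br f g = - pbr br g f.
Proof.
rewrite /pbr exchange_big -sumrN; apply: eq_bigr => i _.
rewrite -sumrN; apply: eq_bigr => j _.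
rewrite [br (delta_mx _ j) _](brC hbr) linearN; ring.
Qed.

Lemma pbrCl c h : pbr br c%:MP h = 0.
Proof. by rewrite pbrE big1 // => j _; rewrite pderC mul0r. Qed.
Lemma pbrDl f g h : pbr br (f + g) h = pbr br f h + pbr br g h.
Proof. by rewrite !pbrE -big_split; apply: eq_bigr => j _; rewrite linearD mulrDl. Qed.
Lemma pbrZl c f h : pbr br (c *: f) h = c *: pbr br f h.
Proof. by rewrite !pbrE scaler_sumr; apply: eq_bigr => j _; rewrite linearZ scalerAl. Qed.
Lemma pbrMl f g h : pbr br (f * g) h = f * pbr br g h + g * pbr br f h.
Proof.
rewrite !pbrE !mulr_sumr -big_split; apply: eq_bigr => j _.
by rewrite pderM /=; ring.
Qed.

Lemma pbrCr c h : pbr br h c%:MP = 0.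
Proof. by rewrite pbrC pbrCl oppr0. Qed.
Lemma pbrDr f g h : pbr br h (f + g) = pbr br h f + pbr br h g.
Proof. by rewrite pbrC pbrDl opprD -!pbrC. Qed.
Lemma pbrZr c f h : pbr br h (c *: f) = c *: pbr br h f.
Proof. by rewrite pbrC pbrZl -scalerN -pbrC. Qed.
Lemma pbrMr f g h : pbr br h (f * g) = f * pbr br h g + g * pbr br h f.
Proof. by rewrite pbrC pbrMl opprD -!mulrN -!pbrC. Qed.

End PoissonBracket.

Section Subalgebra.
Variables (K : fieldType) (n : nat) (S : {mpoly K[n]} -> Prop).
Hypothesis hS : is_subalg S.

Lemma subalgC c : S c%:MP. Proof. by case: hS => SC _ _ _; apply: SC. Qed.
Lemma subalgD f g : S f -> S g -> S (f + g). Proof. by case: hS => _ SD _ _; apply: SD. Qed.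
Lemma subalgM f g : S f -> S g -> S (f * g). Proof. by case: hS => _ _ SM _; apply: SM. Qed.
Lemma subalgZ c f : S f -> S (c *: f). Proof. by case: hS => _ _ _ SZ; apply: SZ. Qed.
Lemma subalgN f : S f -> S (- f). Proof. by move=> Sf; rewrite -scaleN1r; apply: subalgZ. Qed.

Lemma subalg_sum (I : Type) (r : seq I) (P : pred I) (F : I -> {mpoly K[n]}) :
  (forall i, P i -> S (F i)) -> S (\sum_(i <- r | P i) F i).
Proof.
move=> SF; elim/big_rec: _ => [|i f Pi Sf]; last by apply: subalgD => //; apply: SF.
by rewrite -mpolyC0; apply: subalgC.
Qed.

Lemma subalg_prod (I : Type) (r : seq I) (P : pred I) (F : I -> {mpoly K[n]}) :
  (forall i, P i -> S (F i)) -> S (\prod_(i <- r | P i) F i).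
Proof.
move=> SF; elim/big_rec: _ => [|i f Pi Sf]; last by apply: subalgM => //; apply: SF.
exact: (subalgC 1).
Qed.

Lemma subalg_comp k (t : 'I_k -> {mpoly K[n]}) (q : {mpoly K[k]}) :
  (forall j, S (t j)) -> S (comp_mpoly [tuple t j | j < k] q).
Proof.
move=> St; rewrite [q]mpolyE raddf_sum /=; apply: subalg_sum => m _.
rewrite comp_mpolyZ comp_mpolyX; apply/subalgZ/subalg_prod => i _.
rewrite tnth_mktuple; elim: (m i) => [|e Se]; first exact: (subalgC 1).
by rewrite exprS; apply: subalgM.
Qed.

End Subalgebra.

Section Isotropy.
Variables (K : fieldType) (n : nat) (br : 'rV[K]_n -> 'rV[K]_n -> 'rV[K]_n).
Hypothesis hbr : is_lie_bracket br.
Local Notation vec := 'rV[K]_n.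
Local Notation poly := {mpoly K[n]}.
Implicit Types (x u v w : vec) (F G : poly -> Prop).

Lemma PhiDl x u v w : Phi br x (u + v) w = Phi br x u w + Phi br x v w.
Proof. by rewrite !PhiE (brDl hbr) linearD evalpD. Qed.
Lemma PhiDr x u v w : Phi br x w (u + v) = Phi br x w u + Phi br x w v.
Proof. by rewrite !PhiE (brDr hbr) linearD evalpD. Qed.
Lemma PhiZl x a u w : Phi br x (a *: u) w = a * Phi br x u w.
Proof. by rewrite !PhiE (brZl hbr) linearZ evalpZ. Qed.
Lemma PhiZr x a u w : Phi br x w (a *: u) = a * Phi br x w u.
Proof. by rewrite !PhiE (brZr hbr) linearZ evalpZ. Qed.
Lemma PhiC x u v : Phi br x u v = - Phi br x v u.
Proof. by rewrite !PhiE (brC hbr) linearN evalpN. Qed.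
Lemma Phixx x u : Phi br x u u = 0.
Proof. by rewrite PhiE (brvv hbr) linear0 evalp0. Qed.
Lemma PhiBl x u v w : Phi br x (u - v) w = Phi br x u w - Phi br x v w.
Proof. by rewrite -scaleN1r PhiDl PhiZl mulN1r. Qed.
Lemma Phi_suml x (I : Type) (r : seq I) (P : pred I) (G : I -> vec) w :
  Phi br x (\sum_(i <- r | P i) G i) w = \sum_(i <- r | P i) Phi br x (G i) w.
Proof.
by rewrite PhiE (br_suml hbr) linear_sum evalp_sum; apply: eq_bigr => i _; rewrite PhiE.
Qed.
Lemma Phi_sumr x (I : Type) (r : seq I) (P : pred I) (G : I -> vec) w :
  Phi br x w (\sum_(i <- r | P i) G i) = \sum_(i <- r | P i) Phi br x w (G i).
Proof.
by rewrite PhiE (br_sumr hbr) linear_sum evalp_sum; apply: eq_bigr => i _; rewrite PhiE.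
Qed.

Lemma dspanP F x a u v : dspan F x u -> dspan F x v -> dspan F x (a *: u + v).
Proof.
move=> [k1 [fs1 [cs1 [Ffs1 ->]]]] [k2 [fs2 [cs2 [Ffs2 ->]]]].
exists (k1 + k2)%N.
exists (fun i => match split i with inl j => fs1 j | inr j => fs2 j end).
exists (fun i => match split i with inl j => a * cs1 j | inr j => cs2 j end).
split; first by move=> i; case: (split i).
rewrite big_split_ord /= scaler_sumr; congr (_ + _); apply: eq_bigr => j _.
  by rewrite (unsplitK (inl _ : 'I_k1 + 'I_k2)) scalerA.
by rewrite (unsplitK (inr _ : 'I_k1 + 'I_k2)).
Qed.

Lemma dspan0 F x : dspan F x 0.
Proof. by exists 0%N, (fun=> 0), (fun=> 0); split; [case | rewrite big_ord0]. Qed.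
Lemma dspan_subspace F x : is_subspace (dspan F x).
Proof. by split; [exact: dspan0 | move=> *; apply: dspanP]. Qed.
Lemma dspanD F x u v : dspan F x u -> dspan F x v -> dspan F x (u + v).
Proof. by move=> Fu Fv; rewrite -[u]scale1r; apply: dspanP. Qed.
Lemma dspanZ F x a u : dspan F x u -> dspan F x (a *: u).
Proof. by move=> Fu; rewrite -[_ *: u]addr0; apply: dspanP => //; apply: dspan0. Qed.
Lemma dspan_sum F x (I : Type) (r : seq I) (P : pred I) (G : I -> vec) :
  (forall i, P i -> dspan F x (G i)) -> dspan F x (\sum_(i <- r | P i) G i).
Proof.
move=> FG; elim/big_rec: _ => [|i u Pi Fu]; first exact: dspan0.
by apply: dspanD => //; apply: FG.
Qed.
Lemma dspan_dpoly F x f : F f -> dspan F x (dpoly f x).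
Proof. by move=> Ff; exists 1%N, (fun=> f), (fun=> 1); rewrite big_ord1 scale1r. Qed.
Lemma sub_dspan F G x v : (forall f, F f -> G f) -> dspan F x v -> dspan G x v.
Proof. by move=> FG [k [fs [cs [Ffs ->]]]]; exists k, fs, cs; split => // i; apply: FG. Qed.

Lemma dspan_isotropic F x : is_commutative br F -> isotropic br x (dspan F x).
Proof.
move=> cF u v [k1 [fs1 [cs1 [Ffs1 ->]]]] [k2 [fs2 [cs2 [Ffs2 ->]]]].
rewrite Phi_suml big1 // => i _; rewrite PhiZl Phi_sumr big1 ?mulr0 // => j _.
by rewrite PhiZr -(evalp_pbr hbr) cF // evalp0 mulr0.
Qed.

Lemma max_isotropic_orth x (L W : vec -> Prop) p :
  max_isotropic_in br x L W -> is_subspace W -> W p ->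
  (forall b, L b -> Phi br x b p = 0) -> L p.
Proof.
case=> [[L0 LP] LW Liso Lmax] [W0 WP] Wp Lp.
pose U z := exists b t, L b /\ z = b + t *: p.
apply: (Lmax U).
- split; first by exists 0, 0; rewrite scale0r addr0.
  move=> a _ _ [b1 [t1 [Lb1 ->]]] [b2 [t2 [Lb2 ->]]].
  exists (a *: b1 + b2), (a * t1 + t2); split; first exact: LP.
  by rewrite scalerDr addrACA scalerA scalerDl.
- move=> _ _ [b1 [t1 [Lb1 ->]]] [b2 [t2 [Lb2 ->]]].
  rewrite PhiDl !PhiDr !PhiZl !PhiZr Liso // Lp // [Phi br x p b2]PhiC Lp // Phixx.
  by rewrite oppr0 !mulr0 !addr0.
- by move=> b Lb; exists b, 0; rewrite scale0r addr0.
- by move=> _ [b [t [Lb ->]]]; rewrite addrC; apply: WP => //; apply: LW.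
- by exists 0, 1; rewrite scale1r add0r.
Qed.

Lemma poisson_suml A B : forall f, A f -> poisson_sum br A B f.
Proof. by move=> f Af Q _ AQ _; apply: AQ. Qed.
Lemma poisson_sumr A B : forall f, B f -> poisson_sum br A B f.
Proof. by move=> f Bf Q _ _ BQ; apply: BQ. Qed.

Lemma poisson_sum_commutative A B :
  is_commutative br A -> is_commutative br B ->
  (forall a b, A a -> B b -> pbr br a b = 0) ->
  is_commutative br (poisson_sum br A B).
Proof.
move=> cA cB cAB.
(* C, the double commutant of A and B, is a commutative Poisson subalgebra
   containing A and B. *)
pose X f := forall g, A g \/ B g -> pbr br f g = 0.
pose C f := X f /\ forall g, X g -> pbr br f g = 0.
have sX : is_subalg X.
  split=> [c g _|f g Xf Xg h ABh|f g Xf Xg h ABh|c f Xf h ABh].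
  - exact: pbrCl.
  - by rewrite pbrDl Xf // Xg // addr0.
  - by rewrite pbrMl Xf // Xg // !mulr0 addr0.
  - by rewrite pbrZl Xf // scaler0.
have sC : is_subalg C.
  split=> [c|f g [Xf Cf] [Xg Cg]|f g [Xf Cf] [Xg Cg]|c f [Xf Cf]].
  - by split=> [|h _]; [exact: (subalgC sX) | exact: pbrCl].
  - split=> [|h Xh]; first exact: (subalgD sX).
    by rewrite pbrDl Cf // Cg // addr0.
  - split=> [|h Xh]; first exact: (subalgM sX).
    by rewrite pbrMl Cf // Cg // !mulr0 addr0.
  - split=> [|h Xh]; first exact: (subalgZ sX).
    by rewrite pbrZl Cf // scaler0.
have pC : is_poisson_subalg br C.
  split=> // f g [_ Cf] [Xg _]; rewrite Cf // -mpolyC0; exact: (subalgC sC).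
have AC a : A a -> C a.
  move=> Aa; split=> [g [Ag|Bg]|g Xg]; first exact: cA.
    exact: cAB.
  by rewrite (pbrC hbr) Xg ?oppr0 //; left.
have BC b : B b -> C b.
  move=> Bb; split=> [g [Ag|Bg]|g Xg]; last by rewrite (pbrC hbr) Xg ?oppr0 //; right.
    by rewrite (pbrC hbr) cAB ?oppr0.
  exact: cB.
move=> f g PSf PSg.
by have [_ Cf] := PSf C pC AC BC; apply: Cf; case: (PSg C pC AC BC).
Qed.

End Isotropy.

Section Heisenberg.
Variables (K : fieldType) (n : nat) (br : 'rV[K]_n -> 'rV[K]_n -> 'rV[K]_n).
Hypothesis hbr : is_lie_bracket br.
Hypothesis two_neq0 : 2%:R != 0 :> K.
Variables (m : nat) (om : 'M[K]_(m.*2)).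
Hypothesis om_unit : om \in unitmx.
Variable phi : {linear 'rV[K]_(m.*2 + 1) -> 'rV[K]_n}.
Hypothesis phi_inj : injective phi.
Hypothesis phi_hom : forall u v, phi (heis_br om u v) = br (phi u) (phi v).
Hypothesis h_ideal : is_ideal br (img phi).
Hypothesis center_h : forall z, center_in br (img phi) z -> center br z.

Local Notation M := m.*2.
Local Notation vec := 'rV[K]_n.
Local Notation poly := {mpoly K[n]}.
Implicit Types (x y z : vec) (u v : 'rV[K]_(M + 1)).

Definition eps u v : K := (lsubmx u *m om *m (lsubmx v)^T) 0 0.
Definition ee : vec := phi (row_mx 0 1%:M).
Definition EE : poly := lin ee.
Definition psi (a : 'rV[K]_M) : vec := phi (row_mx a 0).

Lemma psi_is_linear : linear psi.
Proof. by move=> c a b; rewrite /psi -linearP scale_row_mx scaler0 add_row_mx addr0. Qed.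
HB.instance Definition _ := GRing.isLinear.Build K 'rV[K]_M vec _ psi psi_is_linear.

Lemma psiE a : psi a = \sum_(l < M) a 0 l *: psi (delta_mx 0 l).
Proof. by rewrite {1}[a]row_sum_delta linear_sum; apply: eq_bigr => l _; rewrite linearZ. Qed.

Lemma phi_decomp u : phi u = psi (lsubmx u) + rsubmx u 0 0 *: ee.
Proof.
rewrite /psi /ee -linearZ -linearD; congr (phi _).
by rewrite scale_row_mx scaler0 add_row_mx addr0 add0r scalemx1 -mx11_scalar hsubmxK.
Qed.

Lemma br_phi u v : br (phi u) (phi v) = eps u v *: ee.
Proof.
rewrite -phi_hom /heis_br /ee -linearZ scale_row_mx scaler0 scalemx1.
by congr (phi (row_mx _ _)); exact: mx11_scalar.
Qed.

Lemma img_phi u : img phi (phi u). Proof. by exists u. Qed.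
Lemma img0 : img phi 0. Proof. by exists 0; rewrite linear0. Qed.
Lemma imgD y z : img phi y -> img phi z -> img phi (y + z).
Proof. by move=> [u ->] [v ->]; exists (u + v); rewrite linearD. Qed.
Lemma imgZ a y : img phi y -> img phi (a *: y).
Proof. by move=> [u ->]; exists (a *: u); rewrite linearZ. Qed.
Lemma img_sum (I : Type) (r : seq I) (P : pred I) (G : I -> vec) :
  (forall i, P i -> img phi (G i)) -> img phi (\sum_(i <- r | P i) G i).
Proof.
move=> hG; elim/big_rec: _ => [|i y Pi hy]; first exact: img0.
by apply: imgD => //; apply: hG.
Qed.

Lemma ee_neq0 : ee != 0.
Proof.
apply/eqP; rewrite -(linear0 phi) => /phi_inj /rowP /(_ (rshift M ord0)).
by rewrite row_mxEr !mxE /= => /eqP; rewrite oner_eq0.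
Qed.

Lemma EE_neq0 : EE != 0.
Proof.
apply: contraNneq ee_neq0 => EE0.
by rewrite -(dpoly_lin ee 0) -/EE EE0 -mpolyC0 dpolyC.
Qed.

Lemma ee_central : center br ee.
Proof.
apply: center_h; split; first exact: img_phi.
by move=> _ [v ->]; rewrite br_phi /eps row_mxKl !mul0mx mxE scale0r.
Qed.

Lemma br_ee_l y : br ee y = 0. Proof. exact: ee_central. Qed.
Lemma br_ee_r y : br y ee = 0. Proof. by rewrite (brC hbr) br_ee_l oppr0. Qed.

Lemma eps_anti u v : eps u v = - eps v u.
Proof.
have := brC hbr (phi u) (phi v); rewrite !br_phi -scaleNr => /eqP.
by rewrite -subr_eq0 -scalerBl scaler_eq0 (negbTE ee_neq0) orbF subr_eq0 => /eqP.
Qed.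

Lemma eps_sum u v : eps u v = \sum_(l < M) lsubmx v 0 l * (lsubmx u *m om) 0 l.
Proof. by rewrite /eps mxE; apply: eq_bigr => l _; rewrite [_^T _ _]mxE mulrC. Qed.

Lemma eps_delta u l : eps u (row_mx (delta_mx 0 l) 0) = (lsubmx u *m om) 0 l.
Proof. by rewrite /eps row_mxKl trmx_delta -colE mxE. Qed.

(* [row k (invmx om)] is the vector of V that is omega-dual to the k-th basis vector. *)
Lemma eps_dual k v : eps (row_mx (row k (invmx om)) 0) v = lsubmx v 0 k.
Proof. by rewrite /eps row_mxKl -row_mul mulVmx // row1 -rowE !mxE. Qed.

Lemma Phi_phi x u v : Phi br x (phi u) (phi v) = eps u v * evalp EE x.
Proof. by rewrite PhiE br_phi linearZ evalpZ. Qed.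

Lemma Phi_ee x y : Phi br x y ee = 0.
Proof. by rewrite PhiE br_ee_r linear0 evalp0. Qed.

Lemma br_phi_expand y v :
  br y (phi v) = \sum_(l < M) lsubmx v 0 l *: br y (psi (delta_mx 0 l)).
Proof.
rewrite phi_decomp (brDr hbr) (brZr hbr) br_ee_r scaler0 addr0.
by rewrite psiE (br_sumr hbr); apply: eq_bigr => l _; rewrite (brZr hbr).
Qed.

Section AnnihilatorElement.
Variables (xi : vec) (uu : 'I_M -> 'rV[K]_(M + 1)).
Hypothesis huu : forall k, br xi (psi (delta_mx 0 k)) = phi (uu k).

(* [[xi, v_k], v_l] = cxi k l *: e for the basis v_k := psi (delta_mx 0 k) of V. *)
Definition cxi k l := eps (uu k) (row_mx (delta_mx 0 l) 0).

Lemma eps_uu k v : eps (uu k) v = \sum_(l < M) lsubmx v 0 l * cxi k l.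
Proof. by rewrite eps_sum; apply: eq_bigr => l _; rewrite /cxi eps_delta. Qed.

Lemma cxiC k l : cxi k l = cxi l k.
Proof.
have := br_jacobi hbr xi (psi (delta_mx 0 k)) (psi (delta_mx 0 l)).
rewrite [br (psi _) xi](brC hbr) !huu (brNr hbr) /psi !br_phi.
rewrite (brZr hbr) br_ee_r scaler0 add0r -scaleNr -scalerDl => /eqP.
rewrite scaler_eq0 (negbTE ee_neq0) orbF eps_anti opprK addrC.
by rewrite [eps _ (uu k)]eps_anti addrC subr_eq0 => /eqP /esym.
Qed.

Definition wdual k : poly := lin (psi (row k (invmx om))).
Definition vbr k : poly := lin (br xi (psi (delta_mx 0 k))).

(* Solving {F, v_l} = 0 for all l with F = e xi + (quadratic in V) yields this
   correction; the symmetry [cxiC] (Jacobi) makes the quadratic term exist. *)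
Definition Fxi : poly := EE * lin xi - \sum_(k < M) wdual k * vbr k
  + 2%:R^-1 *: \sum_(k < M) \sum_(l < M) cxi k l *: (wdual k * wdual l).

Variable v : 'rV[K]_(M + 1).

Lemma pder_EE : pder br (phi v) EE = 0.
Proof. by rewrite /EE (pder_lin hbr) br_ee_l linear0. Qed.

Lemma pder_wdual k : pder br (phi v) (wdual k) = lsubmx v 0 k *: EE.
Proof. by rewrite /wdual (pder_lin hbr) /psi br_phi eps_dual linearZ. Qed.

Lemma pder_vbr k :
  pder br (phi v) (vbr k) = (\sum_(l < M) lsubmx v 0 l * cxi k l) *: EE.
Proof. by rewrite /vbr (pder_lin hbr) huu br_phi eps_uu linearZ. Qed.

Lemma pder_xi : pder br (phi v) (lin xi) = \sum_(l < M) lsubmx v 0 l *: vbr l.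
Proof.
rewrite (pder_lin hbr) br_phi_expand linear_sum.
by apply: eq_bigr => l _; rewrite linearZ.
Qed.

Lemma pder_Fxi : pder br (phi v) Fxi = 0.
Proof.
set a := lsubmx v.
set T := \sum_(k < M) (\sum_(l < M) a 0 l * cxi k l) *: (wdual k * EE).
set S := \sum_(k < M) a 0 k *: (vbr k * EE).
have dEx : pder br (phi v) (EE * lin xi) = S.
  rewrite pderM pder_EE mulr0 addr0 pder_xi mulr_sumr; apply: eq_bigr => l _.
  by rewrite -scalerAr mulrC.
have dWV : pder br (phi v) (\sum_(k < M) wdual k * vbr k) = T + S.
  rewrite linear_sum -big_split; apply: eq_bigr => k _ /=.
  by rewrite pderM pder_wdual pder_vbr -!scalerAr addrC.
have dWW : pder br (phi v) (\sum_(k < M) \sum_(l < M) cxi k l *: (wdual k * wdual l))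
    = T + T.
  transitivity (\sum_(k < M) \sum_(l < M) (cxi k l * a 0 l) *: (wdual k * EE) +
                \sum_(k < M) \sum_(l < M) (cxi k l * a 0 k) *: (wdual l * EE)).
    rewrite linear_sum -big_split; apply: eq_bigr => k _ /=.
    rewrite linear_sum -big_split; apply: eq_bigr => l _ /=.
    by rewrite linearZ /= pderM !pder_wdual -!scalerAr scalerDr !scalerA addrC.
  congr (_ + _).
    apply: eq_bigr => k _; rewrite scaler_suml.
    by apply: eq_bigr => l _; rewrite mulrC.
  rewrite exchange_big; apply: eq_bigr => l _; rewrite scaler_suml.
  by apply: eq_bigr => k _; rewrite cxiC mulrC.
rewrite /Fxi linearD linearB linearZ /= dEx dWV dWW -mulr2n -scaler_nat scalerA.
by rewrite mulVf // scale1r opprD addrA addrAC subrK subrr.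
Qed.

End AnnihilatorElement.

Definition dpoly_in_img (f : poly) := forall x, img phi (dpoly f x).

Lemma dpoly_in_img_subalg : is_subalg dpoly_in_img.
Proof.
split=> [c x|f g hf hg x|f g hf hg x|c f hf x].
- by rewrite dpolyC; exact: img0.
- by rewrite dpolyD; apply: imgD.
- by rewrite dpolyM; apply: imgD; apply: imgZ.
- by rewrite dpolyZ; apply: imgZ.
Qed.

Lemma dpoly_in_img_lin y : img phi y -> dpoly_in_img (lin y).
Proof. by move=> hy x; rewrite dpoly_lin. Qed.

Lemma EE_Ann : Ann br (img phi) EE.
Proof. by move=> eta _; rewrite (pbr_lin hbr) /EE (pder_lin hbr) br_ee_l linear0. Qed.

Lemma exists_Ann_dpoly xi : exists2 F : poly,
  Ann br (img phi) F & forall x, img phi (dpoly F x - evalp EE x *: xi).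
Proof.
have : forall k : 'I_M, exists u, br xi (psi (delta_mx 0 k)) = phi u.
  by move=> k; have [u ->] := h_ideal.2 xi _ (img_phi (row_mx (delta_mx 0 k) 0)); exists u.
case/fin_all_exists => uu huu.
exists (Fxi xi uu) => [_ [v ->]|x]; first by rewrite (pbr_lin hbr) pder_Fxi.
rewrite /Fxi -addrA dpolyD dpolyM !dpoly_lin addrAC [_ + _ - _]addrAC subrr add0r.
apply: imgD; first exact/imgZ/img_phi.
have D := dpoly_in_img_subalg.
apply: (subalgD D).
  apply/(subalgN D)/(subalg_sum D) => k _.
  apply: (subalgM D); apply: dpoly_in_img_lin; first exact: img_phi.
  by rewrite huu; exact: img_phi.
apply/(subalgZ D)/(subalg_sum D) => k _; apply/(subalg_sum D) => l _.
by apply/(subalgZ D)/(subalgM D); apply/dpoly_in_img_lin/img_phi.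
Qed.

Lemma Ann_dpoly_orth F x eta :
  Ann br (img phi) F -> img phi eta -> Phi br x (dpoly F x) eta = 0.
Proof. by move=> AF heta; rewrite -[eta](dpoly_lin _ x) -(evalp_pbr hbr) AF // evalp0. Qed.

Lemma orth_img_center x u : evalp EE x != 0 ->
  (forall eta, img phi eta -> Phi br x (phi u) eta = 0) -> phi u = rsubmx u 0 0 *: ee.
Proof.
move=> xe0 uperp.
have u0 : lsubmx u = 0.
  apply: (can_inj (mulmxK om_unit)); rewrite mul0mx; apply/rowP => j.
  have := uperp _ (img_phi (row_mx (delta_mx 0 j) 0)).
  by rewrite Phi_phi eps_delta => /eqP; rewrite mulf_eq0 (negbTE xe0) orbF !mxE => /eqP.
by rewrite phi_decomp u0 linear0 add0r.
Qed.

Lemma dspan_Ann_orth x w : evalp EE x != 0 ->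
  (forall eta, img phi eta -> Phi br x w eta = 0) -> dspan (Ann br (img phi)) x w.
Proof.
move=> xe0 wperp; set xe := evalp EE x.
have : forall i : 'I_n, exists2 F : poly,
    Ann br (img phi) F & img phi (dpoly F x - xe *: delta_mx 0 i).
  by move=> i; have [F AF hF] := exists_Ann_dpoly (delta_mx 0 i); exists F.
case/fin_all_exists2 => Fs AFs imgFs.
set S := \sum_(i < n) w 0 i *: dpoly (Fs i) x.
have [u def_u] : img phi (S - xe *: w).
  rewrite [w]row_sum_delta scaler_sumr -sumrB; apply: img_sum => i _.
  by rewrite scalerA mulrC -scalerA -scalerBr; apply: imgZ.
have u_center : phi u = rsubmx u 0 0 *: ee.
  apply: (orth_img_center xe0) => eta heta.
  rewrite -def_u (PhiBl hbr) (PhiZl hbr) wperp // mulr0 subr0.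
  by rewrite (Phi_suml hbr) big1 // => i _; rewrite (PhiZl hbr) Ann_dpoly_orth ?mulr0.
have -> : w = xe^-1 *: (S - rsubmx u 0 0 *: dpoly EE x).
  rewrite /EE dpoly_lin -u_center -def_u opprB addrC subrK.
  by rewrite scalerA mulVf // scale1r.
rewrite -scaleNr; apply/dspanZ/dspanD; last exact/dspanZ/dspan_dpoly/EE_Ann.
by apply: dspan_sum => i _; apply/dspanZ/dspan_dpoly.
Qed.

(* Phi_x restricted to V is <x, e> omega, which is nondegenerate. *)
Lemma orth_decomp x y : evalp EE x != 0 ->
  exists a, forall eta, img phi eta -> Phi br x (y - psi a) eta = 0.
Proof.
move=> xe0; set c := \row_j Phi br x y (psi (delta_mx 0 j)).
exists ((evalp EE x)^-1 *: (c *m invmx om)) => _ [u ->].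
rewrite phi_decomp (PhiDr hbr) (PhiZr hbr) Phi_ee mulr0 addr0.
rewrite [psi (lsubmx u)]psiE (Phi_sumr hbr) big1 // => l _.
rewrite (PhiZr hbr) (PhiBl hbr) Phi_phi eps_delta row_mxKl -scalemxAl mulmxKV // !mxE.
by rewrite mulrAC mulVf // mul1r subrr mulr0.
Qed.

Lemma Sh_lin y : img phi y -> Sh phi (lin y).
Proof.
case=> u ->; exists (\sum_(j < M + 1) u 0 j *: 'X_j).
rewrite raddf_sum /= {1}[u]row_sum_delta !linear_sum; apply: eq_bigr => j _.
by rewrite comp_mpolyZ comp_mpolyXU !linearZ (nth_mktuple _ 0).
Qed.

Lemma dspan_Sh_img x y : dspan (Sh phi) x y -> img phi y.
Proof.
case=> k [fs [cs [Shfs ->]]]; apply: img_sum => i _; apply: imgZ.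
have [q ->] := Shfs i; apply: (subalg_comp dpoly_in_img_subalg) => j.
exact/dpoly_in_img_lin/img_phi.
Qed.

Lemma pbr_Ann_Sh f g : Ann br (img phi) f -> Sh phi g -> pbr br f g = 0.
Proof.
move=> Af [q ->].
have sZ : is_subalg (fun h => pbr br f h = 0).
  split=> [c|g1 g2 g1f g2f|g1 g2 g1f g2f|c h hf].
  - exact: (pbrCr hbr).
  - by rewrite (pbrDr hbr) g1f g2f addr0.
  - by rewrite (pbrMr hbr) g1f g2f !mulr0 addr0.
  - by rewrite (pbrZr hbr) hf scaler0.
by apply: (subalg_comp sZ) => j; apply: Af; exact: img_phi.
Qed.

Section Completeness.
Variables A B : poly -> Prop.
Hypothesis hAc : complete_in br (Ann br (img phi)) A.
Hypothesis hBc : complete_in br (Sh phi) B.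

Lemma commutative_poisson_sum : is_commutative br (poisson_sum br A B).
Proof.
have [AAnn cA _] := hAc; have [BSh cB _] := hBc.
apply: (poisson_sum_commutative hbr cA cB) => a b Aa Bb.
exact: pbr_Ann_Sh (AAnn _ Aa) (BSh _ Bb).
Qed.

Lemma poisson_sum_max_isotropic x : evalp EE x != 0 ->
  max_isotropic_in br x (dspan A x) (dspan (Ann br (img phi)) x) ->
  max_isotropic_in br x (dspan B x) (dspan (Sh phi) x) ->
  max_isotropic_in br x (dspan (poisson_sum br A B) x) (dspan (@Sg K n) x).
Proof.
move=> xe0 maxA maxB; have [BSh _ _] := hBc.
split.
- exact: dspan_subspace.
- by move=> z _; rewrite -(dpoly_lin z x); apply: dspan_dpoly.
- exact/(dspan_isotropic hbr)/commutative_poisson_sum.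
move=> U [_ UP] Uiso PSU _ v Uv.
have AU z : dspan A x z -> U z by move/(sub_dspan (poisson_suml (A:=A) (B:=B)))/PSU.
have BU z : dspan B x z -> U z by move/(sub_dspan (poisson_sumr (A:=A) (B:=B)))/PSU.
have [a vperp] := orth_decomp v xe0.
have Bpsi : dspan B x (psi a).
  apply: (max_isotropic_orth hbr maxB); first exact: dspan_subspace.
    by rewrite -(dpoly_lin (psi a) x); apply/dspan_dpoly/Sh_lin/img_phi.
  move=> b Bb; have imgb := dspan_Sh_img (sub_dspan BSh Bb).
  have -> : psi a = v - (v - psi a) by rewrite opprB addrC subrK.
  by rewrite (PhiC hbr) (PhiBl hbr) vperp // subr0 Uiso ?oppr0 //; apply: BU.
have Aw : dspan A x (v - psi a).
  apply: (max_isotropic_orth hbr maxA); first exact: dspan_subspace.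
    exact: dspan_Ann_orth.
  move=> b Ab; apply: Uiso; first exact: AU.
  by rewrite addrC -scaleN1r; apply: UP => //; apply: BU.
rewrite -(subrK (psi a) v); apply: dspanD.
  exact: sub_dspan (poisson_suml (A:=A) (B:=B)) Aw.
exact: sub_dspan (poisson_sumr (A:=A) (B:=B)) Bpsi.
Qed.

Lemma complete_poisson_sum : complete_in br (@Sg K n) (poisson_sum br A B).
Proof.
have [_ _ [pA [pA_neq0 maxA]]] := hAc; have [_ _ [pB [pB_neq0 maxB]]] := hBc.
split=> //; first exact: commutative_poisson_sum.
exists (EE * pA * pB); split; first by rewrite !mulf_neq0 // EE_neq0.
move=> x; rewrite !evalpM !mulf_eq0 !negb_or => /andP[/andP[xe0 /maxA mA] /maxB mB].
exact: poisson_sum_max_isotropic.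
Qed.

End Completeness.

End Heisenberg.

Theorem proposition5 (K : fieldType) (hK : [pchar K] =i pred0)
  (n : nat) (br : 'rV[K]_n -> 'rV[K]_n -> 'rV[K]_n) (hbr : is_lie_bracket br)
  (m : nat) (om : 'M[K]_(m.*2)) (hom : symplectic_form om)
  (phi : {linear 'rV[K]_(m.*2 + 1) -> 'rV[K]_n})
  (phi_inj : injective phi)
  (phi_hom : forall u v, phi (heis_br om u v) = br (phi u) (phi v))
  (h_ideal : is_ideal br (img phi))
  (h_center : forall z, center br z <-> center_in br (img phi) z)
  (A B : {mpoly K[n]} -> Prop)
  (hA : is_subalg A) (hAc : complete_in br (Ann br (img phi)) A)
  (hB : is_subalg B) (hBc : complete_in br (Sh phi) B) :
  complete_in br (Sg (n:=n)) (poisson_sum br A B).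
Proof.
have two_neq0 : 2%:R != 0 :> K by rewrite (pcharf0P K).1.
apply: complete_poisson_sum hAc hBc => //; first exact: hom.2.
by move=> z /h_center.
Qed.
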